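(* Let $G$ be an equimatchable graph and let $k$ be an integer with $1<k\leq\nu(G)$. Then $I(G)^{[k]}:I(G)^{[k-1]}=I(G)^{[k]}$.
   Context: A finite simple graph is equimatchable if every maximal (by inclusion) matching is a maximum matching. Vertices are identified with variables of $S=K[x_1,\ldots,x_n]$ ($K$ a field), edges with degree-2 monomials. $I(G)^{[k]}$ is the ideal generated by all products $e_1\cdots e_k$ over $k$-matchings of $G$; $I(G)^{[1]}=I(G)$ is the edge ideal. $\nu(G)$ is the matching number. *)

From HB Require Import structures.
From mathcomp Require Import all_boot all_order all_algebra.
Set Implicit Arguments. Unset Strict Implicit. Unset Printing Implicit Defensive.
Import GRing.Theory.
Local Open Scope ring_scope.

(* The polynomial ring S = K[x_0,...,x_{n-1}], built as iterated univariate
   polynomial rings: mpoly K 0 = K, mpoly K (m+1) = (mpoly K m)[x_m]. *)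
Fixpoint mpoly (K : fieldType) (n : nat) : comNzRingType :=
  if n is m.+1 then ({poly mpoly K m} : comNzRingType) else (K : comNzRingType).

(* the variable x_i of mpoly K n (i < n); 0 if i >= n (never used) *)
Fixpoint mvar (K : fieldType) (n : nat) (i : nat) : mpoly K n :=
  match n return mpoly K n with
  | 0 => 0
  | m.+1 => if i == m then ('X : {poly mpoly K m}) else (mvar K m i)%:P
  end.

Definition x_ (K : fieldType) (n : nat) (i : 'I_n) : mpoly K n := mvar K n i.

Definition in_ideal (R : comNzRingType) (gs : seq R) (f : R) : Prop :=
  exists c : 'I_(size gs) -> R, f = \sum_(i < size gs) c i * gs`_i.

Definition in_colon (R : comNzRingType) (I J : seq R) (f : R) : Prop :=
  forall g, in_ideal J g -> in_ideal I (f * g).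

Definition simple_graph (n : nat) (E : {set {set 'I_n}}) : Prop :=
  forall e, e \in E -> #|e| = 2%N.

Definition is_matching (n : nat) (E M : {set {set 'I_n}}) : bool :=
  (M \subset E) && trivIset M.

Definition is_maximal_matching (n : nat) (E M : {set {set 'I_n}}) : bool :=
  is_matching E M &&
  [forall e in E, (e \notin M) ==> ~~ is_matching E (e |: M)].

Definition matching_number (n : nat) (E : {set {set 'I_n}}) : nat :=
  \max_(M : {set {set 'I_n}} | is_matching E M) #|M|.

Definition is_maximum_matching (n : nat) (E M : {set {set 'I_n}}) : bool :=
  is_matching E M && (#|M| == matching_number E).

Definition equimatchable (n : nat) (E : {set {set 'I_n}}) : Prop :=
  forall M, is_maximal_matching E M -> is_maximum_matching E M.

Definition edge_mon (K : fieldType) (n : nat) (e : {set 'I_n}) : mpoly K n :=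
  \prod_(v in e) x_ K v.

Definition matching_mon (K : fieldType) (n : nat) (M : {set {set 'I_n}})
  : mpoly K n := \prod_(e in M) edge_mon K e.

(* generators of I(G)^[k]: the products e_1 ... e_k over k-matchings *)
Definition sqpow_gens (K : fieldType) (n : nat) (E : {set {set 'I_n}}) (k : nat)
  : seq (mpoly K n) :=
  map (@matching_mon K n)
      (enum [set M : {set {set 'I_n}} | is_matching E M & #|M| == k]).

From mathcomp Require Import all_boot all_order all_algebra.
From Stdlib Require Import FunctionalExtensionality.
Set Implicit Arguments. Unset Strict Implicit. Unset Printing Implicit Defensive.

(* I(G)^[k] is a squarefree monomial ideal: a polynomial lies in it iff the support
   of each of its monomials contains the vertex set of a k-matching.  Hence f is in
   the colon ideal iff, for the support S of each monomial of f and every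
   (k-1)-matching M, the set S ∪ V(M) contains a k-matching.  In an equimatchable
   graph this forces S itself to contain a k-matching.  Otherwise take a largest
   matching P inside S (so |P| < k), extend it to a maximal, hence maximum, matching
   Q, and let A be the edges of Q meeting S.  Choose a (k-1)-matching M with
   P ⊆ M ⊆ A or A ⊆ M ⊆ Q; the k-matching N inside S ∪ V(M) then has |N| <= |M|.
   In the first case, the edges of N inside S are at most |P| by maximality of P,
   and the others are at most the number of vertices of M outside S, each edge of M
   having at most one.  In the second case, N together with Q \ M would be a
   matching with more than ν(G) edges. *)

Section CardSubsets.
Variable T : finType.
Implicit Types A B P : {set T}.

Lemma exists_subset_card A m : m <= #|A| -> exists2 B : {set T}, B \subset A & #|B| = m.
Proof.
move=> /card_geqP[s [s_uniq s_size sA]]; exists [set x in s].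
  by apply/subsetP=> x; rewrite inE => /sA.
by rewrite cardsE (card_uniqP s_uniq).
Qed.

Lemma exists_between_card P A m :
  P \subset A -> #|P| <= m -> m <= #|A| ->
  exists M : {set T}, [/\ P \subset M, M \subset A & #|M| = m].
Proof.
move=> PA Pm mA.
have [|B BAP cardB] := @exists_subset_card (A :\: P) (m - #|P|).
  by rewrite cardsD (setIidPr PA) leq_sub2r.
have /eqP BP0 : B :&: P == set0.
  by rewrite setI_eq0 disjoints_subset (subset_trans BAP) // setDE subsetIr.
exists (P :|: B); split; first exact: subsetUl.
  by rewrite subUset PA (subset_trans BAP) ?subsetDl.
by rewrite cardsU setIC BP0 cards0 subn0 cardB subnKC.
Qed.

Lemma card_cover_setI (Q : {set {set T}}) (Y : {set T}) :
  trivIset Q -> #|cover Q :&: Y| = \sum_(A in Q) #|A :&: Y|.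
Proof.
move=> tQ; rewrite -sum1_card (eq_bigl (fun x => (x \in cover Q) && (x \in Y))).
  rewrite big_trivIset_cond //; apply: eq_bigr => A _.
  by rewrite -sum1_card; apply: eq_bigl => x; rewrite inE.
by move=> x; rewrite inE.
Qed.

Lemma card_cover_notsub_le (N M : {set {set T}}) (S : {set T}) :
  trivIset N -> trivIset M -> cover N \subset S :|: cover M ->
  {in M, forall e, #|e :\: S| <= 1} ->
  #|N :\: powerset S| <= #|M :\: powerset S|.
Proof.
move=> tN tM covN M_out1.
set Nout := N :\: _; set Mout := M :\: _.
have NoutN : Nout \subset N by apply: subsetDl.
have Nout_meet : {in Nout, forall e, 0 < #|e :&: (cover M :\: S)|}.
  move=> e; rewrite !inE => /andP[/subsetPn[x xe xS] eN]; apply/card_gt0P.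
  exists x; rewrite !inE xe xS /=.
  by have := subsetP covN x (subsetP (bigcup_sup _ eN) x xe); rewrite inE (negbTE xS).
have out_le1 : forall e, e \in M -> #|e :&: ~: S| <= (e \in Mout).
  move=> e eM; rewrite !inE eM andbT; case: (boolP (e \subset S)) => eS /=.
    by rewrite leqn0 cards_eq0 setI_eq0 disjoints_subset setCK.
  by rewrite -setDE M_out1.
apply: (@leq_trans (\sum_(e in Nout) #|e :&: (cover M :\: S)|)).
  by rewrite -sum1_card; apply: leq_sum.
rewrite -card_cover_setI ?(trivIsetS NoutN) //.
apply: (@leq_trans #|cover M :&: ~: S|).
  apply: subset_leq_card; apply/subsetP=> x; rewrite !inE => /andP[_ /andP[xS xM]].
  by rewrite xS xM.
rewrite card_cover_setI //; apply: (@leq_trans (\sum_(e in M) (e \in Mout))).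
  exact: leq_sum.
rewrite -sum1_card big_mkcond [X in _ <= X]big_mkcond leq_sum // => e _.
by case: (e \in M); case: (e \in Mout).
Qed.

End CardSubsets.

Section Matchings.
Variables (n : nat) (E : {set {set 'I_n}}).
Hypothesis simpleE : simple_graph E.
Implicit Types M N P Q : {set {set 'I_n}}.

Lemma matching0 : is_matching E set0.
Proof. by rewrite /is_matching sub0set; apply/trivIsetP => A B; rewrite inE. Qed.

Lemma matchingS M N : N \subset M -> is_matching E M -> is_matching E N.
Proof.
by move=> NM /andP[ME tM]; rewrite /is_matching (subset_trans NM ME) (trivIsetS NM tM).
Qed.

Lemma matching_card_le M : is_matching E M -> #|M| <= matching_number E.
Proof. by move=> mM; apply: (leq_bigmax_cond M mM). Qed.

Lemma matching_edge_card M e : is_matching E M -> e \in M -> #|e| = 2.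
Proof. by case/andP=> ME _ eM; apply: simpleE; apply: (subsetP ME). Qed.

Lemma maximal_matching_ext P :
  is_matching E P -> exists2 Q : {set {set 'I_n}}, P \subset Q & is_maximal_matching E Q.
Proof.
move=> mP; pose ext Q := is_matching E Q && (P \subset Q).
have extP : ext P by rewrite /ext mP subxx.
have [Q /andP[mQ PQ] maxQ] := @arg_maxnP _ P ext (fun Q => #|Q|) extP.
exists Q => //; rewrite /is_maximal_matching mQ.
apply/forall_inP=> e _; apply/implyP=> eQ; apply/negP=> meQ.
have := maxQ (e |: Q); rewrite /ext meQ (subset_trans PQ (subsetUr _ _)) cardsU1 eQ.
by move=> /(_ isT) /=; rewrite add1n ltnn.
Qed.

Lemma card_matching_le_meeting P M N (S : {set 'I_n}) :
  (forall N', is_matching E N' -> cover N' \subset S -> #|N'| <= #|P|) ->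
  P \subset M -> cover P \subset S -> is_matching E M ->
  {in M, forall e, e :&: S != set0} ->
  is_matching E N -> cover N \subset S :|: cover M -> #|N| <= #|M|.
Proof.
move=> maxP PM PS mM meetS mN covN.
have Nin_le : #|N :&: powerset S| <= #|P|.
  apply: maxP; first by apply: matchingS mN; apply: subsetIl.
  by apply/bigcupsP=> e; rewrite !inE => /andP[].
have M_out1 : {in M, forall e, #|e :\: S| <= 1}.
  move=> e eM; rewrite cardsD (matching_edge_card mM eM).
  by rewrite leq_subLR addn1 ltnS card_gt0 meetS.
have Nout_le : #|N :\: powerset S| <= #|M :\: P|.
  apply: leq_trans (card_cover_notsub_le _ _ covN M_out1) _.
  - by case/andP: mN.
  - by case/andP: mM.
  apply: subset_leq_card; apply: setDS; apply/subsetP=> e eP.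
  by rewrite inE (subset_trans (bigcup_sup _ eP)).
rewrite -(cardsID (powerset S) N) -(cardsID P M) (setIidPr PM).
exact: leq_add.
Qed.

Lemma disjoint_cover_setD Q M :
  trivIset Q -> M \subset Q -> [disjoint cover (Q :\: M) & cover M].
Proof.
move=> tQ MQ; rewrite disjoint_sym; apply/bigcup_disjointP=> e /setDP[eQ eM].
rewrite disjoint_sym; apply/bigcup_disjointP=> e' e'M.
by apply: (trivIsetP tQ) => //; [apply: (subsetP MQ) | apply: contraNneq eM => ->].
Qed.

Lemma card_matching_le_avoiding Q M N (S : {set 'I_n}) :
  is_matching E Q -> #|Q| = matching_number E -> M \subset Q ->
  {in Q :\: M, forall e : {set 'I_n}, [disjoint e & S]} ->
  is_matching E N -> cover N \subset S :|: cover M -> #|N| <= #|M|.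
Proof.
move=> mQ maxQ MQ avoidS mN covN; set R := Q :\: M.
have /andP[QE tQ] := mQ; have /andP[NE tN] := mN.
have disR : [disjoint cover N & cover R].
  apply: disjointWl covN _; apply/bigcup_disjointP=> e eR.
  rewrite -setI_eq0 setIUl setU_eq0 !setI_eq0 disjoint_sym avoidS //= disjoint_sym.
  exact: disjointWl (bigcup_sup _ eR) (disjoint_cover_setD tQ MQ).
have mNR : is_matching E (N :|: R).
  by rewrite /is_matching subUset NE (subset_trans (subsetDl _ _) QE) trivIsetU ?trivIsetD.
have /eqP NR0 : N :&: R == set0.
  apply/set0Pn=> -[e /setIP[eN eR]].
  have eQ : e \in Q by apply: (subsetP (subsetDl Q M)).
  have /card_gt0P[x xe] : 0 < #|e| by rewrite (matching_edge_card mQ eQ).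
  have := subsetP (bigcup_sup _ eR) x xe.
  by rewrite (disjointFr disR (subsetP (bigcup_sup _ eN) x xe)).
have := matching_card_le mNR; rewrite cardsU NR0 cards0 subn0 -maxQ.
by rewrite -(cardsID M Q) (setIidPr MQ) leq_add2r.
Qed.

Hypothesis equiE : equimatchable E.

Lemma equimatchable_matching_within k (S : {set 'I_n}) :
  0 < k <= matching_number E ->
  (forall M, is_matching E M -> #|M| = k.-1 ->
     exists N, [/\ is_matching E N, #|N| = k & cover N \subset S :|: cover M]) ->
  exists N, [/\ is_matching E N, #|N| = k & cover N \subset S].
Proof.
case/andP=> k_gt0 k_le augment.
pose within P := is_matching E P && (cover P \subset S).
have within0 : within set0 by rewrite /within matching0 /cover big_set0 sub0set.
have [P /andP[mP PS] maxP] := @arg_maxnP _ set0 within (fun P => #|P|) within0.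
have [kP | Pk] := leqP k #|P|.
  have [N NP cardN] := exists_subset_card kP; exists N; split=> //.
    exact: matchingS NP mP.
  apply/bigcupsP=> e eN; exact: subset_trans (bigcup_sup _ (subsetP NP e eN)) PS.
exfalso; have [Q PQ maxlQ] := maximal_matching_ext mP.
have /andP[mQ /eqP cardQ] := equiE maxlQ.
have maxP' N : is_matching E N -> cover N \subset S -> #|N| <= #|P|.
  by move=> mN NS; apply: maxP; rewrite /within mN.
pose A := [set e in Q | e :&: S != set0].
have AQ : A \subset Q by apply/subsetP=> e; rewrite inE => /andP[].
have N_gt_M (M N : {set {set 'I_n}}) : #|M| = k.-1 -> #|N| = k -> #|N| <= #|M| -> False.
  by move=> -> ->; rewrite leqNgt ltn_predL k_gt0.
have [k1A | Ak1] := leqP k.-1 #|A|.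
  have PA : P \subset A.
    apply/subsetP=> e eP; rewrite inE (subsetP PQ) //=.
    have eS : e \subset S by apply: subset_trans (bigcup_sup _ eP) PS.
    by rewrite (setIidPl eS) -card_gt0 (matching_edge_card mP eP).
  have P_le : #|P| <= k.-1 by rewrite -ltnS prednK.
  have [M [PM MA cardM]] := exists_between_card PA P_le k1A.
  have mM : is_matching E M by apply: matchingS mQ; apply: subset_trans MA AQ.
  have [N [mN cardN covN]] := augment M mM cardM.
  apply: (N_gt_M M N) => //; apply: (card_matching_le_meeting maxP') => //.
  by move=> e /(subsetP MA); rewrite inE => /andP[].
have k1Q : k.-1 <= #|Q| by rewrite cardQ (leq_trans (leq_pred k)).
have [M [AM MQ cardM]] := exists_between_card AQ (ltnW Ak1) k1Q.
have [N [mN cardN covN]] := augment M (matchingS MQ mQ) cardM.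
apply: (N_gt_M M N) => //; apply: (card_matching_le_avoiding mQ cardQ MQ _ mN covN).
move=> e /setDP[eQ eM]; rewrite -setI_eq0.
by apply: contraNT eM => meet; apply: (subsetP AM); rewrite inE eQ.
Qed.

End Matchings.

Import GRing.Theory.
Local Open Scope ring_scope.

Definition upd (s : nat -> bool) (i : nat) (b : bool) : nat -> bool :=
  fun x => if x == i then b else s x.

Lemma upd_id s i b c : upd (upd s i b) i c = upd s i c.
Proof. by apply: functional_extensionality => x; rewrite /upd; case: (x == i). Qed.

Lemma upd_comm s i j b c : i != j -> upd (upd s j b) i c = upd (upd s i c) j b.
Proof.
move=> ne_ij; apply: functional_extensionality => x; rewrite /upd.
by case: (eqVneq x i) => [->|//]; rewrite (negbTE ne_ij).
Qed.

Lemma upd_or s a (l : seq nat) :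
  upd (fun x => s x || (x \in l)) a true = (fun x => s x || (x \in a :: l)).
Proof.
apply: functional_extensionality => x; rewrite /upd inE.
by case: (x == a); rewrite ?orbT.
Qed.

Definition upward_closed (P : (nat -> bool) -> Prop) :=
  forall s t : nat -> bool, (forall i, s i -> t i) -> P s -> P t.

Lemma upward_closed_upd P i b : upward_closed P -> upward_closed (fun s => P (upd s i b)).
Proof.
by move=> upP s t st; apply: upP => x; rewrite /upd; case: (x == i) => //; apply: st.
Qed.

Section MonomialSupports.
Variable K : fieldType.

(* [monomials_sat P f]: the support of every monomial occurring in [f], seen as a
   predicate on variable indices, satisfies [P].  In [mpoly K m.+1], the coefficient
   of [x_m ^ j] is tested with [x_m] in the support exactly when [j > 0]. *)
Fixpoint monomials_sat (m : nat) : ((nat -> bool) -> Prop) -> mpoly K m -> Prop :=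
  match m return ((nat -> bool) -> Prop) -> mpoly K m -> Prop with
  | 0 => fun P c => c = 0 \/ P (fun _ => false)
  | m'.+1 => fun P f => forall j : nat,
      monomials_sat (fun s => P (upd s m' (j != 0)%N)) ((f : {poly mpoly K m'})`_j)
  end.

Implicit Types (m : nat) (P Q : (nat -> bool) -> Prop).

Lemma monomials_sat_mono m P Q (f : mpoly K m) :
  (forall s, P s -> Q s) -> monomials_sat P f -> monomials_sat Q f.
Proof.
elim: m P Q f => [|m IH] P Q f PQ /=; first by case=> [->|/PQ]; [left|right].
by move=> Pf j; apply: IH (Pf j) => s; apply: PQ.
Qed.

Lemma monomials_sat0 m P : monomials_sat P (0 : mpoly K m).
Proof. by elim: m P => [|m IH] P /=; [left | move=> j; rewrite coef0]. Qed.

Lemma monomials_satD m P (f g : mpoly K m) :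
  monomials_sat P f -> monomials_sat P g -> monomials_sat P (f + g).
Proof.
elim: m P f g => [|m IH] P f g /=.
  by case=> [->|Pf]; case=> [->|Pg]; rewrite ?addr0; [left|right|right|right].
by move=> Pf Pg j; rewrite coefD; apply: IH.
Qed.

Lemma monomials_sat_sum m P (I : Type) (r : seq I) (F : I -> mpoly K m) :
  (forall i, monomials_sat P (F i)) -> monomials_sat P (\sum_(i <- r) F i).
Proof.
move=> PF; elim/big_ind: _ => //; [exact: monomials_sat0 | exact: monomials_satD].
Qed.

Lemma monomials_sat_and m P Q (f : mpoly K m) :
  monomials_sat P f -> monomials_sat Q f -> monomials_sat (fun s => P s /\ Q s) f.
Proof.
elim: m P Q f => [|m IH] P Q f /=.
  by case=> [->|Pf]; [left | case=> [->|Qf]; [left|right]].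
by move=> Pf Qf j; apply: IH (Pf j) (Qf j).
Qed.

Lemma monomials_sat_true m (f : mpoly K m) : monomials_sat (fun _ => True) f.
Proof. by elim: m f => [|m IH] f /=; [right | move=> j; apply: IH]. Qed.

Lemma monomials_sat_all m (T : eqType) (l : seq T) (Q : T -> (nat -> bool) -> Prop)
    (f : mpoly K m) :
  (forall x, x \in l -> monomials_sat (Q x) f) ->
  monomials_sat (fun s => forall x, x \in l -> Q x s) f.
Proof.
elim: l => [|a l IH] Qf.
  by apply: monomials_sat_mono (monomials_sat_true f) => s _ x; rewrite in_nil.
have Qf_l x : x \in l -> monomials_sat (Q x) f by move=> xl; apply: Qf; rewrite inE xl orbT.
apply: monomials_sat_mono (monomials_sat_and (Qf a (mem_head _ _)) (IH Qf_l)).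
by move=> s [Qa Ql] x; rewrite inE => /predU1P[->|/Ql].
Qed.

Lemma monomials_satMl m P (g f : mpoly K m) :
  upward_closed P -> monomials_sat P f -> monomials_sat P (g * f).
Proof.
elim: m P g f => [|m IH] P g f upP /=.
  by case=> [->|Pf]; [left; rewrite mulr0 | right].
move=> Pf j; rewrite coefM; apply: monomials_sat_sum => i.
apply: IH; first exact: upward_closed_upd.
apply: monomials_sat_mono (Pf (j - i)%N) => s; apply: upP => x; rewrite /upd.
by case: (x == m); case: j i => [|j] [[|i] lt_ij] //=.
Qed.

Lemma monomials_sat1 m P : P (fun _ => false) -> monomials_sat P (1 : mpoly K m).
Proof.
elim: m P => [|m IH] P P0 /=; first by right.
case=> [|j]; rewrite coef1 /=; last exact: monomials_sat0.
apply: IH; congr P: P0; apply: functional_extensionality => x; rewrite /upd.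
by case: (x == m).
Qed.

Lemma monomials_sat_mulX m P i (f : mpoly K m) : (i < m)%N ->
  monomials_sat P (mvar K m i * f) <-> monomials_sat (fun s => P (upd s i true)) f.
Proof.
elim: m P f => [|m IH] P f //=; case: eqVneq => [-> _ | ne_im lt_im].
  split=> Pf j.
    by have := Pf j.+1; rewrite coefXM /=; apply: monomials_sat_mono => s; rewrite upd_id.
  case: j => [|j]; rewrite coefXM /=; first exact: monomials_sat0.
  by apply: monomials_sat_mono (Pf j) => s; rewrite upd_id.
have lt_im' : (i < m)%N by rewrite ltn_neqAle ne_im -ltnS.
split=> Pf j.
  move: (Pf j); rewrite coefCM => /(IH _ _ lt_im').
  by apply: monomials_sat_mono => s /=; rewrite (upd_comm _ _ _ ne_im).
rewrite coefCM; apply/(IH _ _ lt_im'); apply: monomials_sat_mono (Pf j) => s.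
by rewrite /= (upd_comm _ _ _ ne_im).
Qed.

Lemma monomials_sat_mul_prod m P (l : seq nat) (f : mpoly K m) :
  all (fun i => i < m)%N l ->
  monomials_sat P ((\prod_(i <- l) mvar K m i) * f) <->
  monomials_sat (fun s => P (fun x => s x || (x \in l))) f.
Proof.
elim: l P => [|a l IH] P /=.
  move=> _; rewrite big_nil mul1r.
  suff -> : (fun s => P (fun x => s x || (x \in [::]))) = P by [].
  apply: functional_extensionality => s; congr P.
  by apply: functional_extensionality => x; rewrite orbF.
case/andP=> lt_am lt_lm; rewrite big_cons -mulrA.
split=> [/(monomials_sat_mulX _ _ lt_am)/(IH _ lt_lm) | Pf].
  by apply: monomials_sat_mono => s /=; rewrite upd_or.
apply/(monomials_sat_mulX _ _ lt_am)/(IH _ lt_lm).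
by apply: monomials_sat_mono Pf => s /=; rewrite upd_or.
Qed.

Definition supp_mon m (s : nat -> bool) : mpoly K m := \prod_(i < m | s i) mvar K m i.

Lemma supp_monS m s :
  supp_mon m.+1 s = ((supp_mon m s)%:P * (if s m then 'X else 1) : {poly mpoly K m}).
Proof.
rewrite /supp_mon big_mkcond big_ord_recr /= eqxx rmorph_prod /=.
congr (_ * _); rewrite [RHS]big_mkcond; apply: eq_bigr => i _ /=.
by rewrite (ltn_eqF (ltn_ord i)); case: (s i); rewrite ?polyC1.
Qed.

Lemma monomials_sat_ideal m P (J : mpoly K m -> Prop) (f : mpoly K m) :
  J 0 -> (forall a b, J a -> J b -> J (a + b)) -> (forall c a, J a -> J (c * a)) ->
  (forall s, P s -> J (supp_mon m s)) ->
  monomials_sat P f -> J f.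
Proof.
elim: m P J f => [|m IH] P J f J0 JD JM JP /=.
  by case=> [->|/JP]; rewrite // /supp_mon big_ord0 => J1; rewrite -[f]mulr1; apply: JM.
move=> Pf; rewrite -[f : {poly mpoly K m}]coefK poly_def.
elim/big_ind: _ => [||j _]; [exact: J0 | exact: JD |].
rewrite -mul_polyC; apply: (IH _ (fun c => J (c%:P * 'X^j))) (Pf j).
- by rewrite polyC0 mul0r.
- by move=> a b Ja Jb; rewrite polyCD mulrDl; apply: JD.
- by move=> c a Ja; rewrite polyCM -mulrA; apply: JM.
move=> s /JP; rewrite supp_monS /upd eqxx.
have -> : supp_mon m (upd s m (j != 0 :> nat)%N) = supp_mon m s.
  by apply: eq_bigl => i; rewrite /upd (ltn_eqF (ltn_ord i)).
case: j => [[|j] lt_j] /=; first by rewrite expr0 !mulr1.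
by move=> Jc; rewrite exprS mulrA mulrC; apply: JM.
Qed.

End MonomialSupports.

Section Ideals.
Variable R : comNzRingType.
Implicit Types gs : seq R.

Lemma in_ideal0 gs : in_ideal gs 0.
Proof. by exists (fun=> 0); rewrite big1 // => i _; rewrite mul0r. Qed.

Lemma in_idealD gs a b : in_ideal gs a -> in_ideal gs b -> in_ideal gs (a + b).
Proof.
case=> ca ->; case=> cb ->; exists (fun i => ca i + cb i).
by rewrite -big_split; apply: eq_bigr => i _; rewrite mulrDl.
Qed.

Lemma in_idealMl gs c a : in_ideal gs a -> in_ideal gs (c * a).
Proof.
case=> ca ->; exists (fun i => c * ca i).
by rewrite mulr_sumr; apply: eq_bigr => i _; rewrite mulrA.
Qed.

Lemma mem_in_ideal gs x : x \in gs -> in_ideal gs x.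
Proof.
move=> xgs; have lt_x : (index x gs < size gs)%N by rewrite index_mem.
exists (fun i => (i == Ordinal lt_x)%:R).
rewrite (bigD1 (Ordinal lt_x)) //= eqxx mul1r nth_index // big1 ?addr0 //.
by move=> i /negbTE ->; rewrite mul0r.
Qed.

End Ideals.

Section EdgeIdeals.
Variables (K : fieldType) (n : nat) (E : {set {set 'I_n}}).
Implicit Types (N M : {set {set 'I_n}}) (k : nat).

Definition has_matching_within k (s : nat -> bool) : Prop :=
  exists N, [/\ is_matching E N, #|N| = k & cover N \subset [set v : 'I_n | s v]].

Lemma upward_closed_matching_within k : upward_closed (has_matching_within k).
Proof.
move=> s t st [N [mN cardN covN]]; exists N; split=> //.
by apply: subset_trans covN _; apply/subsetP=> v; rewrite !inE; apply: st.
Qed.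

Definition cover_seq N : seq nat := [seq val v | v in cover N].

Lemma mem_cover_seq N (v : 'I_n) : (val v \in cover_seq N) = (v \in cover N).
Proof. by rewrite mem_map ?mem_enum //; apply: val_inj. Qed.

Lemma cover_seq_lt N : all (fun i => i < n)%N (cover_seq N).
Proof. by apply/allP=> i /mapP[v _ ->]; apply: ltn_ord. Qed.

Lemma matching_mon_cover N : trivIset N -> matching_mon K N = \prod_(v in cover N) x_ K v.
Proof. by move=> tN; rewrite big_trivIset. Qed.

Lemma matching_mon_seq N :
  trivIset N -> matching_mon K N = \prod_(i <- cover_seq N) mvar K n i.
Proof. by move=> tN; rewrite matching_mon_cover // -big_enum big_map. Qed.

Lemma matching_mon_sqpow_gens k N :
  is_matching E N -> #|N| = k -> matching_mon K N \in sqpow_gens K E k.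
Proof. by move=> mN cardN; apply: map_f; rewrite mem_enum inE mN cardN eqxx. Qed.

Lemma monomials_sat_matching_mon k N :
  is_matching E N -> #|N| = k -> monomials_sat (has_matching_within k) (matching_mon K N).
Proof.
move=> mN cardN; have /andP[_ tN] := mN.
rewrite matching_mon_seq // -[X in monomials_sat _ X]mulr1.
apply/monomials_sat_mul_prod; first exact: cover_seq_lt.
apply: monomials_sat1; exists N; split=> //.
by apply/subsetP=> v vN; rewrite inE mem_cover_seq.
Qed.

Lemma sqpow_monomials_sat k f :
  in_ideal (sqpow_gens K E k) f <-> monomials_sat (has_matching_within k) f.
Proof.
split=> [[c ->] | Pf].
  apply: monomials_sat_sum => i; apply: monomials_satMl.
    exact: upward_closed_matching_within.
  have /mapP[N] := mem_nth 0 (ltn_ord i); rewrite mem_enum inE => /andP[mN /eqP cardN] ->.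
  exact: monomials_sat_matching_mon.
apply: (monomials_sat_ideal _ _ _ _ Pf).
- exact: in_ideal0.
- exact: in_idealD.
- exact: in_idealMl.
move=> s [N [mN cardN covN]]; have /andP[_ tN] := mN.
rewrite /supp_mon (bigID (fun i => i \in cover N)) /= mulrC; apply: in_idealMl.
rewrite (eq_bigl (fun i => i \in cover N)) -?matching_mon_cover //.
  exact: mem_in_ideal (matching_mon_sqpow_gens mN cardN).
by move=> i; case: (boolP (i \in cover N)) => [/(subsetP covN)|]; rewrite ?inE ?andbT ?andbF.
Qed.

Lemma colon_monomials_sat k f :
  in_colon (sqpow_gens K E k) (sqpow_gens K E k.-1) f ->
  monomials_sat (fun s => forall M, is_matching E M -> #|M| = k.-1 ->
    has_matching_within k (fun x => s x || (x \in cover_seq M))) f.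
Proof.
move=> colf.
pose Ms := enum [set M | is_matching E M & #|M| == k.-1].
have satM M : M \in Ms -> monomials_sat
    (fun s => has_matching_within k (fun x => s x || (x \in cover_seq M))) f.
  rewrite mem_enum inE => /andP[mM /eqP cardM]; have /andP[_ tM] := mM.
  apply/(monomials_sat_mul_prod _ _ (cover_seq_lt M)); rewrite -matching_mon_seq // mulrC.
  exact/sqpow_monomials_sat/colf/mem_in_ideal/matching_mon_sqpow_gens.
apply: monomials_sat_mono (monomials_sat_all satM) => s satMs M mM cardM.
by apply: satMs; rewrite mem_enum inE mM cardM eqxx.
Qed.

End EdgeIdeals.

Unset Implicit Arguments.

Theorem theorem6p5 (K : fieldType) (n : nat) (E : {set {set 'I_n}})
  (hG : simple_graph E) (heq : equimatchable E) (k : nat)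
  (hk1 : (1 < k)%N) (hk2 : (k <= matching_number E)%N) :
  forall f : mpoly K n,
    in_colon (sqpow_gens K E k) (sqpow_gens K E k.-1) f <->
    in_ideal (sqpow_gens K E k) f.
Proof.
move=> f; split=> [colf | If g _]; last by rewrite mulrC; apply: in_idealMl.
apply/sqpow_monomials_sat.
apply: monomials_sat_mono (colon_monomials_sat colf) => s augment.
apply: (equimatchable_matching_within hG heq); first by rewrite hk2 ltnW.
move=> M mM cardM; have [N [mN cardN covN]] := augment M mM cardM.
exists N; split=> //; apply: subset_trans covN _.
by apply/subsetP=> v; rewrite !inE mem_cover_seq.
Qed.
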